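(* For each $d\ge0$ and standard basis $\{v_i\}_{i=0}^d$ of $\mathcal V(d)$, $$Pv_0=\sum_{i=0}^d v_i,\qquad P^2v_0=\sum_{i=0}^d Pv_i,\qquad (-1)^dv_0=\sum_{i=0}^d P^2v_i.$$
   Context: $\mathbb F$ is a field of characteristic zero, $\mathfrak{sl}_2$ the Lie algebra of $2\times2$ trace-zero matrices over $\mathbb F$, with $e=\begin{pmatrix}0&1\\0&0\end{pmatrix}$, $f=\begin{pmatrix}0&0\\1&0\end{pmatrix}$, $h=\begin{pmatrix}1&0\\0&-1\end{pmatrix}$. $\mathcal V(d)$ is the $(d+1)$-dimensional irreducible $\mathfrak{sl}_2$-module; a standard basis $\{v_i\}_{i=0}^d$ satisfies $h.v_i=(d-2i)v_i$, $f.v_i=(i+1)v_{i+1}$, $e.v_i=(d-i+1)v_{i-1}$, $v_{-1}=v_{d+1}=0$; $\varphi_d$ is the corresponding representation. Put $x^*=h-e+f$, $y^*=f$ (nilpotent) and $P=\exp(\varphi_d(x^* ))\exp(\varphi_d(y^* ))$, where $\exp(\varphi_d(u))=\sum_n\varphi_d(u)^n/n!$. *)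

From HB Require Import structures.
From mathcomp Require Import all_boot all_order all_algebra.
Set Implicit Arguments. Unset Strict Implicit. Unset Printing Implicit Defensive.
Import GRing.Theory.
Local Open Scope ring_scope.

(* Matrices of phi_d : sl2 -> gl(V(d)) w.r.t. the standard basis v_0..v_d.
   Column j is the coordinate vector of (x . v_j). *)
Definition phi_h (F : fieldType) (d : nat) : 'M[F]_(d.+1) :=
  \matrix_(i, j) (if i == j :> nat then (d%:R - (2 * j)%:R) else 0).
Definition phi_f (F : fieldType) (d : nat) : 'M[F]_(d.+1) :=
  \matrix_(i, j) (if i == j.+1 :> nat then (j.+1)%:R else 0).
Definition phi_e (F : fieldType) (d : nat) : 'M[F]_(d.+1) :=
  \matrix_(i, j) (if i.+1 == j :> nat then (d.+1 - j)%:R else 0).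

Definition phi_xs (F : fieldType) (d : nat) : 'M[F]_(d.+1) :=
  phi_h F d - phi_e F d + phi_f F d.
Definition phi_ys (F : fieldType) (d : nat) : 'M[F]_(d.+1) := phi_f F d.

(* For a nilpotent (d+1)x(d+1) matrix A one has
   A^(d+1) = 0, so the series is the finite sum over n <= d; we use it only
   for the nilpotent matrices phi_d(x^* ), phi_d(y^* ). *)
Definition mexp (F : fieldType) (d : nat) (A : 'M[F]_(d.+1)) : 'M[F]_(d.+1) :=
  \sum_(n < d.+1) (n`!%:R)^-1 *: A ^+ n.

Definition Pmx (F : fieldType) (d : nat) : 'M[F]_(d.+1) :=
  mexp (phi_xs F d) * mexp (phi_ys F d).

Definition sv (F : fieldType) (d : nat) (i : 'I_d.+1) : 'cV[F]_(d.+1) :=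
  delta_mx i 0.

Arguments phi_h F d : clear implicits.
Arguments phi_f F d : clear implicits.
Arguments phi_e F d : clear implicits.
Arguments phi_xs F d : clear implicits.
Arguments phi_ys F d : clear implicits.
Arguments Pmx F d : clear implicits.
Arguments sv F d i : clear implicits.

From HB Require Import structures.
From mathcomp Require Import all_boot all_order all_algebra zify ring.
Import GRing.Theory.
Local Open Scope ring_scope.

(* Write w(a, b) for the column vector with coordinates a^(d-i) b^i on the
   standard basis v_0, ..., v_d of V(d).  Then v_0 = w(1, 0),
   v_0 + ... + v_d = w(1, 1) and (-1)^d v_0 = w(-1, 0), and the whole
   corollary follows from the single identity

       P w(a, b) = w(a - b, a),                                   (Pw)

   since it gives P w(1,0) = w(1,1), P w(1,1) = w(0,1), P w(0,1) = w(-1,0).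
   To prove (Pw) we compute, by the binomial theorem,
       exp(phi(f)) w(a, b) = w(a, a + b),  exp(phi(e)) w(a, b) = w(a + b, b),
   and we establish the conjugation identity
       phi(x^* ) exp(phi(e)) = exp(phi(e)) phi(f),
   by computing the entries C(d-i, j-i) of exp(phi(e)) and checking a
   binomial identity.  Hence exp(phi(x^* )) exp(phi(e)) = exp(phi(e)) exp(phi(f)),
   which determines exp(phi(x^* )) on the vectors w(c, b) = exp(phi(e)) w(c-b, b).
   The characteristic-zero hypothesis is used to invert the factorials. *)

(* The matrix with entries G i j, for G indexed by natural numbers, so that
   entries may refer to neighbouring indices such as i.+1 or i.-1. *)
Definition natmx (F : fieldType) (m n : nat) (G : nat -> nat -> F) : 'M[F]_(m, n) :=
  \matrix_(i, j) G i j.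
Arguments natmx {F} m n G.

Lemma sum_delta (R : nmodType) (n m : nat) (x : R) :
  \sum_(k < n) (if (k : nat) == m then x else 0) = if (m < n)%N then x else 0.
Proof.
case: ltnP => [lt_mn | le_nm].
  rewrite (bigD1 (Ordinal lt_mn)) //= eqxx big1 ?addr0 // => k neq_km.
  by case: eqP => // eq_km; case/eqP: neq_km; apply: val_inj.
rewrite big1 // => k _; case: eqP => // eq_km.
by move: (ltn_ord k); rewrite eq_km ltnNge le_nm.
Qed.

Lemma moveB2_eq (R : zmodType) (a b c e f : R) : a + e = b + c + f -> a - b - c + e = f.
Proof.
move=> eq_sum; rewrite addrAC [a - b + e]addrAC eq_sum -addrA -opprD.
by rewrite [_ + f]addrC addrK.
Qed.

Section Sl2Action.

Variable F : fieldType.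
Hypothesis charF0 : [pchar F] =i pred0.
Variable d : nat.

Lemma phi_h_mulE m (M : 'M[F]_(d.+1, m)) i j :
  (phi_h F d *m M) i j = (d%:R - (2 * i)%:R) * M i j.
Proof.
rewrite mxE (bigD1 i) //= mxE eqxx big1 ?addr0 // => k neq_ki.
rewrite mxE; case: eqP => [eq_ik | _]; last by rewrite mul0r.
by case/eqP: neq_ki; apply: val_inj.
Qed.

Lemma phi_e_mulE m (G : nat -> nat -> F) (i : 'I_d.+1) (j : 'I_m) :
  (phi_e F d *m natmx d.+1 m G) i j = (d - i)%:R * G i.+1 j.
Proof.
rewrite mxE (eq_bigr (fun k : 'I_d.+1 =>
  if (k : nat) == i.+1 then (d - i)%:R * G i.+1 j else 0)); last first.
  move=> k _; rewrite !mxE /= eq_sym.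
  by case: eqP => [-> | _]; rewrite ?subSS ?mul0r.
rewrite sum_delta ltnS; case: ltnP => // le_di.
have -> : (d - i = 0)%N by apply/eqP; rewrite subn_eq0.
by rewrite mul0r.
Qed.

Lemma phi_f_mulE m (G : nat -> nat -> F) (i : 'I_d.+1) (j : 'I_m) :
  (phi_f F d *m natmx d.+1 m G) i j = (i : nat)%:R * G i.-1 j.
Proof.
rewrite mxE; case: i => [[|i] lt_id] /=.
  by rewrite mul0r big1 // => k _; rewrite !mxE /= mul0r.
rewrite (eq_bigr (fun k : 'I_d.+1 =>
  if (k : nat) == i then (i.+1)%:R * G i j else 0)); last first.
  by move=> k _; rewrite !mxE /= eqSS eq_sym; case: eqP => [-> | _]; rewrite ?mul0r.
by rewrite sum_delta ltnW.
Qed.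

Lemma mul_phi_fE m (G : nat -> nat -> F) (i : 'I_m) (j : 'I_d.+1) :
  G i d.+1 = 0 -> (natmx m d.+1 G *m phi_f F d) i j = (j.+1)%:R * G i j.+1.
Proof.
move=> G_last; rewrite mxE (eq_bigr (fun k : 'I_d.+1 =>
  if (k : nat) == j.+1 then (j.+1)%:R * G i j.+1 else 0)); last first.
  by move=> k _; rewrite !mxE /=; case: eqP => [-> | _]; rewrite ?mulr0 // mulrC.
rewrite sum_delta ltnS; case: ltnP => // le_dj.
have -> : (j : nat) = d by apply/eqP; rewrite eqn_leq le_dj -ltnS ltn_ord.
by rewrite G_last mulr0.
Qed.

Lemma mexp_mulmx (A : 'M[F]_(d.+1)) (v : 'cV[F]_(d.+1)) :
  mexp A *m v = \sum_(k < d.+1) (k`!%:R)^-1 *: (A ^+ k *m v).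
Proof. by rewrite /mexp mulmx_suml; apply: eq_bigr => k _; rewrite scalemxAl. Qed.

Lemma fact_neq0 k : (k`!%:R : F) != 0.
Proof. by rewrite ((pcharf0P F).1 charF0) -lt0n fact_gt0. Qed.

Definition powvec (a b : F) : 'cV[F]_(d.+1) :=
  natmx d.+1 1 (fun i _ => a ^+ (d - i) * b ^+ i).

Lemma phi_f_pow_powvec (a b : F) k :
  phi_f F d ^+ k *m powvec a b =
  natmx d.+1 1 (fun i _ => k`!%:R * 'C(i, k)%:R * (a ^+ (d - i + k) * b ^+ (i - k))).
Proof.
elim: k => [|k IH].
  apply/matrixP => i j; rewrite expr0 mul1mx !mxE.
  by rewrite bin0 fact0 mulr1n !mul1r addn0 subn0.
rewrite exprS -[_ * _]/(mulmx _ _) -mulmxA IH.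
apply/matrixP => i j; rewrite phi_f_mulE [in RHS]mxE.
case: i => [[|i] lt_id] /=.
  by rewrite !bin0n /= !mulr0n mulr0 !mul0r.
rewrite mulrA -!natrM mulnCA mul_bin_diag factS mulnCA mulnA.
by congr (_ * (_ ^+ _ * _ ^+ _)); lia.
Qed.

Lemma exp_f_powvec (a b : F) : mexp (phi_f F d) *m powvec a b = powvec a (a + b).
Proof.
rewrite mexp_mulmx; apply/matrixP => i j; rewrite summxE [in RHS]mxE.
rewrite (eq_bigr (fun k : 'I_d.+1 => 'C(i, k)%:R * (a ^+ (d - i + k) * b ^+ (i - k))));
  last by move=> k _; rewrite phi_f_pow_powvec !mxE !mulrA mulVf ?mul1r ?fact_neq0.
rewrite addrC exprDn mulr_sumr.
rewrite (big_ord_widen d.+1 (fun k => a ^+ (d - i) * (b ^+ (i - k) * a ^+ k *+ 'C(i, k))))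
  ?ltn_ord // [RHS]big_mkcond; apply: eq_bigr => k _; case: ltnP => [lt_ki | le_ik].
  by rewrite exprD -mulr_natl; ring.
by rewrite bin_small ?mul0r.
Qed.

Lemma phi_e_powE k :
  phi_e F d ^+ k =
  natmx d.+1 d.+1 (fun i j => if (j == i + k)%N then k`!%:R * 'C(d - i, k)%:R else 0).
Proof.
elim: k => [|k IH].
  apply/matrixP => i j; rewrite expr0 !mxE addn0 eq_sym.
  have [-> | neq_ij] := eqVneq i j; first by rewrite !eqxx bin0 mulr1.
  by rewrite eq_sym val_eqE (negbTE neq_ij).
rewrite exprS -[_ * _]/(mulmx _ _) IH.
apply/matrixP => i j; rewrite phi_e_mulE [in RHS]mxE addSnnS.
case: eqP => _; last by rewrite mulr0.
by rewrite mulrA -!natrM -mulnA mulnCA subnS mul_bin_diag factS mulnCA mulnA.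
Qed.

Lemma phi_e_pow_powvec (a b : F) k :
  phi_e F d ^+ k *m powvec a b =
  natmx d.+1 1 (fun i _ => k`!%:R * 'C(d - i, k)%:R * (a ^+ (d - i - k) * b ^+ (i + k))).
Proof.
apply/matrixP => i j; rewrite phi_e_powE !mxE.
rewrite (eq_bigr (fun l : 'I_d.+1 => if (l : nat) == (i + k)%N then
   k`!%:R * 'C(d - i, k)%:R * (a ^+ (d - (i + k)) * b ^+ (i + k)) else 0)); last first.
  by move=> l _; rewrite !mxE; case: eqP => [-> | _]; rewrite ?mul0r.
rewrite sum_delta subnDA; case: ltnP => // le_dik.
have lt_k : (d - i < k)%N by rewrite ltn_subLR // -ltnS.
by rewrite bin_small // mulr0 mul0r.
Qed.

Lemma exp_e_powvec (a b : F) : mexp (phi_e F d) *m powvec a b = powvec (a + b) b.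
Proof.
rewrite mexp_mulmx; apply/matrixP => i j; rewrite summxE [in RHS]mxE.
rewrite (eq_bigr (fun k : 'I_d.+1 => 'C(d - i, k)%:R * (a ^+ (d - i - k) * b ^+ (i + k))));
  last by move=> k _; rewrite phi_e_pow_powvec !mxE !mulrA mulVf ?mul1r ?fact_neq0.
rewrite exprDn mulr_suml.
rewrite (big_ord_widen d.+1 (fun k => a ^+ (d - i - k) * b ^+ k *+ 'C(d - i, k) * b ^+ i))
  ?ltnS ?leq_subr // [RHS]big_mkcond; apply: eq_bigr => k _.
case: ltnP => [lt_k | le_k]; last by rewrite bin_small ?mul0r.
by rewrite exprD -mulr_natl; ring.
Qed.

Definition expe_coef (i j : nat) : nat := if (i <= j)%N then 'C(d - i, j - i) else 0.

Lemma exp_eE : mexp (phi_e F d) = natmx d.+1 d.+1 (fun i j => (expe_coef i j)%:R).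
Proof.
apply/matrixP => i j; rewrite /mexp summxE [in RHS]mxE /expe_coef.
rewrite (eq_bigr (fun k : 'I_d.+1 => if (k : nat) == (if (i <= j)%N then j - i else d.+1)%N
     then 'C(d - i, j - i)%:R else 0)); last first.
  move=> k _; rewrite phi_e_powE !mxE; case: (leqP i j) => [le_ij | lt_ji].
    rewrite -(eqn_add2l i k) subnKC // eq_sym.
    case: eqP => [<- | _]; last by rewrite mulr0.
    by rewrite addKn mulrA mulVf ?mul1r ?fact_neq0.
  rewrite (ltn_eqF (ltn_ord k)) ifF ?mulr0 //.
  by apply/negbTE; rewrite neq_ltn (leq_trans lt_ji) ?leq_addr.
rewrite sum_delta; case: (leqP i j) => [le_ij | _]; last by rewrite ltnn.
by rewrite (leq_ltn_trans (leq_subr i j) (ltn_ord j)).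
Qed.

(* Binomial identity behind the conjugation formula below, written with
   m = d - i and r = j - i. *)
Lemma binomial_conj_identity (i m r : nat) : (r <= m)%N ->
  ((i + m) * 'C(m, r) + i * 'C(m.+1, r.+1) =
   2 * i * 'C(m, r) + m * (if r is 0 then 0 else 'C(m.-1, r.-1))
   + (i + r).+1 * 'C(m, r.+1))%N.
Proof.
move=> le_rm.
have diag := mul_bin_diag m r.
have down := mul_bin_down m r.
have shift : (m * (if r is 0 then 0 else 'C(m.-1, r.-1)) = r * 'C(m, r))%N.
  by case: r {diag down le_rm} => [|r]; [rewrite muln0 | apply: mul_bin_diag].
rewrite binS shift; move: diag down shift.
move: ('C(m, r)) ('C(m, r.+1)) ('C(m.-1, r)) => X Y Z.
nia.
Qed.

(* Entrywise form of phi(x^* ) exp(phi(e)) = exp(phi(e)) phi(f), with the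
   subtracted terms moved to the left-hand side. *)
Lemma expe_coef_rec (i j : nat) : (i <= d)%N -> (j <= d)%N ->
  (d * expe_coef i j + i * expe_coef i.-1 j =
   2 * i * expe_coef i j + (d - i) * expe_coef i.+1 j + j.+1 * expe_coef i j.+1)%N.
Proof.
move=> le_id le_jd; rewrite /expe_coef.
case: (leqP i j) => [le_ij | lt_ji].
  rewrite (leq_trans le_ij (leqnSn j)).
  have def_d := subnKC le_id; have def_j := subnKC le_ij.
  move: (d - i)%N (j - i)%N def_d def_j => m r def_d def_j; subst d j.
  have le_rm : (r <= m)%N by rewrite -(leq_add2l i).
  rewrite -addnS addKn.
  have -> : (i < i + r)%N = (0 < r)%N by rewrite -{1}(addn0 i) ltn_add2l.
  have E1 : (i * (if (i.-1 <= i + r)%N then 'C(i + m - i.-1, i + r - i.-1) else 0)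
             = i * 'C(m.+1, r.+1))%N.
    case: i {le_id le_jd le_ij} => [|i] //=.
    by rewrite (leq_trans (leqnSn i) (leq_addr r _)) !addSn !subSn ?leq_addr // !addKn.
  have E2 : (m * (if (0 < r)%N then 'C(i + m - i.+1, i + r - i.+1) else 0)
             = m * (if r is 0 then 0 else 'C(m.-1, r.-1)))%N.
    by case: r {le_rm le_jd le_ij E1} => [|r] //=; congr (_ * 'C(_, _)); lia.
  by rewrite E1 E2 binomial_conj_identity // addnS.
rewrite ltnNge (ltnW lt_ji) /= !muln0 !add0n ?addn0.
case: (ltngtP i j.+1) => [lt_ij1 | lt_j1i | ->].
- by rewrite ltnS leqNgt lt_ji in lt_ij1.
- by rewrite ifF ?muln0 //; apply/negbTE; rewrite -ltnNge; lia.
- by rewrite /= leqnn !subnn !bin0.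
Qed.

(* Conjugation: phi(x^* ) exp(phi(e)) = exp(phi(e)) phi(f), i.e.
   exp(ad e) f = f + h - e = x^*. *)
Lemma phi_xs_exp_e : phi_xs F d *m mexp (phi_e F d) = mexp (phi_e F d) *m phi_f F d.
Proof.
rewrite exp_eE /phi_xs mulmxDl mulmxBl.
set G := fun i j => (expe_coef i j)%:R : F.
have hG : phi_h F d *m natmx d.+1 d.+1 G = \matrix_(i, j) ((d%:R - (2 * i)%:R) * G i j).
  by apply/matrixP => i j; rewrite phi_h_mulE !mxE.
have eG : phi_e F d *m natmx d.+1 d.+1 G = \matrix_(i, j) ((d - i)%:R * G i.+1 j).
  by apply/matrixP => i j; rewrite phi_e_mulE !mxE.
have fG : phi_f F d *m natmx d.+1 d.+1 G = \matrix_(i, j) ((i : nat)%:R * G i.-1 j).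
  by apply/matrixP => i j; rewrite phi_f_mulE !mxE.
have Gf : natmx d.+1 d.+1 G *m phi_f F d = \matrix_(i, j) ((j.+1)%:R * G i j.+1).
  apply/matrixP => i j; rewrite mul_phi_fE ?mxE // /G /expe_coef.
  by case: leqP => // le_i; rewrite bin_small // subSn // -ltnS.
rewrite hG eG fG Gf; apply/matrixP => i j; rewrite !mxE /G.
rewrite mulrBl; apply: moveB2_eq; rewrite -!natrM -!natrD.
by rewrite expe_coef_rec // -ltnS.
Qed.

Lemma mexp_intertwine (A B M : 'M[F]_(d.+1)) :
  A *m M = M *m B -> mexp A *m M = M *m mexp B.
Proof.
move=> AM_MB.
have powAM k : A ^+ k *m M = M *m B ^+ k.
  elim: k => [|k IH]; first by rewrite !expr0 mul1mx mulmx1.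
  by rewrite !exprS -![_ * _]/(mulmx _ _) -mulmxA IH !mulmxA AM_MB.
rewrite /mexp mulmx_suml mulmx_sumr; apply: eq_bigr => k _.
by rewrite -scalemxAl powAM scalemxAr.
Qed.

Lemma Pmx_powvec (a b : F) : Pmx F d *m powvec a b = powvec (a - b) a.
Proof.
have exp_xs_e := mexp_intertwine _ _ _ phi_xs_exp_e.
have split_a : powvec a (a + b) = mexp (phi_e F d) *m powvec (- b) (a + b).
  by rewrite exp_e_powvec [a + b]addrC addKr.
rewrite /Pmx /phi_ys -[_ * _]/(mulmx _ _) -mulmxA exp_f_powvec split_a mulmxA exp_xs_e.
by rewrite -mulmxA exp_f_powvec [a + b]addrC addKr exp_e_powvec addrC.
Qed.

Lemma sv0_powvec : sv F d 0 = powvec 1 0.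
Proof. by apply/matrixP => i j; rewrite !mxE expr1n mul1r expr0n (ord1 j) eqxx andbT. Qed.

Lemma sum_sv_powvec : \sum_(i < d.+1) sv F d i = powvec 1 1.
Proof.
apply/matrixP => i j; rewrite summxE [in RHS]mxE !expr1n mulr1 (ord1 j).
rewrite (bigD1 i) //= big1 ?addr0; first by rewrite mxE !eqxx.
by move=> k neq_ki; rewrite mxE eq_sym (negbTE neq_ki).
Qed.

Lemma powvecN1_0 : powvec (-1) 0 = (-1) ^+ d *: sv F d 0.
Proof.
rewrite sv0_powvec; apply/matrixP => i j; rewrite !mxE !expr0n expr1n mul1r.
by case: (eqVneq (i : nat) 0%N) => [-> | _]; rewrite ?subn0 // mulr0n !mulr0.
Qed.

End Sl2Action.

Theorem corollary8p14 (F : fieldType) (charF0 : [pchar F] =i pred0) (d : nat) :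
  let P := Pmx F d in
  [/\ P *m sv F d 0 = \sum_(i < d.+1) sv F d i,
      (P * P) *m sv F d 0 = \sum_(i < d.+1) P *m sv F d i
    & (-1) ^+ d *: sv F d 0 = \sum_(i < d.+1) (P * P) *m sv F d i].
Proof.
move=> P; have Pw := @Pmx_powvec F charF0 d; rewrite -[P * P]/(P *m P).
have P_v0 : P *m sv F d 0 = \sum_(i < d.+1) sv F d i.
  by rewrite sv0_powvec sum_sv_powvec Pw subr0.
split=> //; first by rewrite -mulmx_sumr -P_v0 mulmxA.
by rewrite -mulmx_sumr sum_sv_powvec -mulmxA !Pw subrr sub0r powvecN1_0.
Qed.
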